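(* Let $X$ be a finite $n$-dimensional simplicial complex and $0\le k\le n-1$. There exists a $k$-cone function (with some apex) if and only if $\widetilde H_j(X)=\widetilde H^j(X)=0$ for every $0\le j\le k$.
   Context: $X(-1)=\{\emptyset\}$. Over $\mathbb{F}_2$: $C_j(X)$ has basis $X(j)$, $\partial_j\sigma=\sum_{\tau\subset\sigma,|\tau|=|\sigma|-1}\tau$ (so $\partial_0\{u\}=\emptyset$); $\widetilde H_j(X)=\ker\partial_j/\operatorname{Im}\partial_{j+1}$, and $\widetilde H^j(X)$ is the corresponding (reduced) cohomology with $\mathbb{F}_2$ coefficients. Cone function: a $(-1)$-cone function with apex $v$ maps $\emptyset\mapsto\{v\}$; for $k\ge0$, a $k$-cone function with apex $v$ is a linear map $\operatorname{Cone}^v_k:\bigoplus_{j=-1}^kC_j\to\bigoplus_{j=-1}^kC_{j+1}$ (sending $C_j$ into $C_{j+1}$) whose restriction to $\bigoplus_{j=-1}^{k-1}C_j$ is a $(k-1)$-cone function with apex $v$, and with $\partial_{k+1}\operatorname{Cone}^v_k(A)=A+\operatorname{Cone}^v_k(\partial_kA)$ for all $A\in C_k$. *)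

From mathcomp Require Import all_boot all_algebra.
Set Implicit Arguments. Unset Strict Implicit. Unset Printing Implicit Defensive.
Import GRing.Theory.
Local Open Scope ring_scope.

(* A finite abstract simplicial complex on the finite vertex type V:
   a downward-closed family of finite sets, containing the empty face
   (so X(-1) = {emptyset}). *)
Definition simplicial_complex (V : finType) (X : {set {set V}}) : Prop :=
  set0 \in X /\ forall s t : {set V}, s \in X -> t \subset s -> t \in X.

Definition has_dim (V : finType) (X : {set {set V}}) (n : nat) : Prop :=
  (exists2 s, s \in X & #|s| = n.+1) /\ (forall s, s \in X -> (#|s| <= n.+1)%N).

Definition chain (V : finType) := {ffun {set V} -> 'F_2}.

Definition chain1 (V : finType) (s : {set V}) : chain V :=
  [ffun t : {set V} => (t == s)%:R].

(* c lies in the span of the faces of X with exactly m vertices,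
   i.e. in C_{m-1}(X)  (m = 0 gives C_{-1}(X) = span{emptyset}). *)
Definition Cc (V : finType) (X : {set {set V}}) (m : nat) (c : chain V) : Prop :=
  forall s, c s != 0 -> s \in X /\ #|s| = m.

(* Boundary: the linear extension of
   d(sigma) = sum of the codimension-1 subsets tau of sigma
   (so d{u} = emptyset and d(emptyset) = 0). *)
Definition bd (V : finType) (c : chain V) : chain V :=
  [ffun t : {set V} => \sum_(s : {set V} | (t \subset s) && (#|s| == #|t|.+1)) c s].

Definition additive_map (A B : zmodType) (f : A -> B) : Prop :=
  forall a b, f (a + b) = f a + f b.

(* k-cone function with apex v (unfolding the recursive definition):
   an F_2-linear map F on chains, sending C_j(X) into C_{j+1}(X) for
   -1 <= j <= k, with F(emptyset) = {v}, and
   d F(A) = A + F(d A) for all A in C_j(X), 0 <= j <= k. *)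
Definition cone_function (V : finType) (X : {set {set V}}) (k : nat) (v : V)
    (F : chain V -> chain V) : Prop :=
  [/\ additive_map F,
      (forall m, (m <= k.+1)%N -> forall A, Cc X m A -> Cc X m.+1 (F A)),
      F (chain1 set0) = chain1 [set v] &
      (forall j, (j <= k)%N -> forall A, Cc X j.+1 A ->
           bd (F A) = A + F (bd A))].

Definition homology_vanishes (V : finType) (X : {set {set V}}) (j : nat) : Prop :=
  forall c, Cc X j.+1 c -> bd c = 0 -> exists2 b, Cc X j.+2 b & bd b = c.

(* Cochains are given by
   F_2-linear maps on all chains; only their restriction matters. *)
Definition cohomology_vanishes (V : finType) (X : {set {set V}}) (j : nat) : Prop :=
  forall phi : chain V -> 'F_2, additive_map phi ->
    (forall b, Cc X j.+2 b -> phi (bd b) = 0) ->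
    exists2 psi : chain V -> 'F_2, additive_map psi &
      forall a, Cc X j.+1 a -> phi a = psi (bd a).

(* A k-cone function F is a chain contraction in degrees at most k:
   bd (F A) + F (bd A) = A.  So a j-cycle z bounds F z, and a j-cocycle phi
   is the coboundary of phi \o F.
   Conversely, F is built on the faces of X by induction on their size,
   starting from F(emptyset) = {v}.  For a face s all of whose proper faces
   are already treated, s + F (bd s) is a cycle (by bd \o bd = 0 and the cone
   identity on bd s); since homology vanishes it is the boundary of some b,
   and F s := b.  This direction does not use the cohomology hypothesis. *)

From mathcomp Require Import all_boot all_algebra zify.
From Stdlib Require Import IndefiniteDescription.
Set Implicit Arguments. Unset Strict Implicit. Unset Printing Implicit Defensive.
Import GRing.Theory.
Local Open Scope ring_scope.

Lemma addrr_F2 (x : 'F_2) : x + x = 0.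
Proof. by apply: addrr_pchar2; apply: pchar_Fp. Qed.

Lemma addr_eq0_F2 (x y : 'F_2) : (x + y == 0) = (x == y).
Proof. by rewrite addr_eq0 oppr_pchar2 //; apply: pchar_Fp. Qed.

Section Chains.
Variable V : finType.
Implicit Types (c d : chain V) (s t u : {set V}).

Lemma card_setU1_between t s : t \subset s ->
  #|[set u : {set V} | [&& t \subset u, u \subset s & #|u| == #|t|.+1]]| = #|s :\: t|.
Proof.
move=> ts; rewrite -(@card_in_imset _ _ (fun x => x |: t) (mem (s :\: t))).
  apply: eq_card => u; rewrite inE; apply/idP/imsetP.
    case/and3P=> tu us /eqP cu.
    have /cards1P[x ux] : #|u :\: t| == 1%N.
      by rewrite cardsD (setIidPr tu) cu subSnn.
    exists x; last by rewrite -[LHS](setID u t) (setIidPr tu) ux setUC.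
    by move: (set11 x); rewrite -ux !inE => /andP[-> /(subsetP us)].
  case=> x; rewrite !inE => /andP[xt xs] ->.
  by rewrite subsetUr subUset sub1set xs ts cardsU1 xt eqxx.
move=> x y; rewrite !inE => /andP[xt _] /andP[yt _] Exy.
by move: (setU11 x t); rewrite Exy !inE (negbTE xt) orbF => /eqP.
Qed.

Lemma addrr_chain c : c + c = 0.
Proof. by apply/ffunP=> t; rewrite !ffunE addrr_F2. Qed.

Lemma bdD c d : bd (c + d) = bd c + bd d.
Proof.
by apply/ffunP=> t; rewrite !ffunE -big_split; apply: eq_bigr => s _; rewrite ffunE.
Qed.

Lemma bd_chain1E s t : bd (chain1 s) t = ((t \subset s) && (#|s| == #|t|.+1))%:R.
Proof.
rewrite ffunE big_mkcond (bigD1 s) //= ffunE eqxx big1 ?addr0.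
  by case: ifP.
by move=> u /negbTE nus; rewrite ffunE nus if_same.
Qed.

Lemma bd_bd_chain1 s : bd (bd (chain1 s)) = 0.
Proof.
(* The coefficient of t counts the faces strictly between t and s: two when
   t has codimension 2 in s, none otherwise. *)
apply/ffunP=> t; rewrite ffunE [RHS]ffunE.
under eq_bigr do rewrite bd_chain1E.
rewrite -natr_sum /nat_of_bool -big_mkcondr sum1dep_card /=.
have [/andP[ts /eqP cs] | not_between] := boolP ((t \subset s) && (#|s| == #|t|.+2)).
  rewrite (_ : [set u | _] =
               [set u : {set V} | [&& t \subset u, u \subset s & #|u| == #|t|.+1]]).
    rewrite card_setU1_between // cardsD (setIidPr ts) cs -[#|t|.+2]addn2 addKn.
    by rewrite mulr2n addrr_F2.
  apply/setP=> u; rewrite !inE cs.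
  by case: (#|u| =P #|t|.+1) => [->|]; rewrite ?eqxx ?andbT ?andbF.
rewrite (_ : [set u | _] = set0) ?cards0 //; apply/setP=> u; rewrite !inE.
apply: contraNF not_between => /andP[/andP[tu /eqP cu] /andP[us /eqP cs]].
by rewrite (subset_trans tu us) cs cu eqxx.
Qed.

Definition linext (h : {set V} -> chain V) c : chain V :=
  [ffun t => \sum_s c s * h s t].

Lemma linextD h c d : linext h (c + d) = linext h c + linext h d.
Proof.
apply/ffunP=> t; rewrite !ffunE -big_split /=.
by apply: eq_bigr => s _; rewrite ffunE mulrDl.
Qed.

Lemma linext0 h : linext h 0 = 0.
Proof. by apply/ffunP=> t; rewrite !ffunE big1 // => s _; rewrite ffunE mul0r. Qed.

Lemma linext_addl h1 h2 c :
  linext (fun s => h1 s + h2 s) c = linext h1 c + linext h2 c.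
Proof.
apply/ffunP=> t; rewrite !ffunE -big_split /=.
by apply: eq_bigr => s _; rewrite ffunE mulrDr.
Qed.

Lemma linext_chain1 h s : linext h (chain1 s) = h s.
Proof.
apply/ffunP=> t; rewrite ffunE (bigD1 s) //= ffunE eqxx mul1r big1 ?addr0 //.
by move=> u /negbTE nus; rewrite ffunE nus mul0r.
Qed.

Lemma linext_id c : linext (@chain1 V) c = c.
Proof.
apply/ffunP=> t; rewrite ffunE (bigD1 t) //= ffunE eqxx mulr1 big1 ?addr0 //.
by move=> u /negbTE nut; rewrite ffunE eq_sym nut mulr0.
Qed.

Lemma linext_comp h g c : linext h (linext g c) = linext (fun s => linext h (g s)) c.
Proof.
apply/ffunP=> t; rewrite !ffunE.
under eq_bigr do rewrite ffunE mulr_suml.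
rewrite exchange_big /=; apply: eq_bigr => s _.
by rewrite ffunE mulr_sumr; apply: eq_bigr => u _; rewrite mulrA.
Qed.

Lemma eq_in_linext h1 h2 c :
  (forall s, c s != 0 -> h1 s = h2 s) -> linext h1 c = linext h2 c.
Proof.
move=> eq_h; apply/ffunP=> t; rewrite !ffunE; apply: eq_bigr => s _.
by case: (eqVneq (c s) 0) => [->|/eq_h ->]; rewrite ?mul0r.
Qed.

Lemma linext_support h c t :
  linext h c t != 0 -> exists2 s, c s != 0 & h s t != 0.
Proof.
rewrite ffunE => nz.
have [s /andP[] | none] := pickP (fun s => (c s != 0) && (h s t != 0)); first by exists s.
case/eqP: nz; apply: big1 => s _; move: (none s).
by case: (eqVneq (c s) 0) => [-> | _ /negbFE/eqP ->]; rewrite ?mul0r ?mulr0.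
Qed.

Lemma bd_linext h c : bd (linext h c) = linext (fun s => bd (h s)) c.
Proof.
apply/ffunP=> t; rewrite !ffunE.
under eq_bigr do rewrite ffunE.
by rewrite exchange_big /=; apply: eq_bigr => s _; rewrite ffunE mulr_sumr.
Qed.

Lemma bd_linextE c : bd c = linext (fun s => bd (chain1 s)) c.
Proof. by rewrite -bd_linext linext_id. Qed.

Lemma bd_bd c : bd (bd c) = 0.
Proof.
rewrite [bd c]bd_linextE bd_linext (eq_in_linext (h2 := fun=> 0)) => [|s _].
  by apply/ffunP=> t; rewrite !ffunE big1 // => s _; rewrite mulr0.
exact: bd_bd_chain1.
Qed.

Lemma bd_chain1_support s t : bd (chain1 s) t != 0 -> t \subset s /\ #|s| = #|t|.+1.
Proof. by rewrite bd_chain1E; case: andP => [[? /eqP] | _]; rewrite ?eqxx. Qed.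

Lemma bd_linext_cone h c :
  (forall s, c s != 0 -> bd (h s) = chain1 s + linext h (bd (chain1 s))) ->
  bd (linext h c) = c + linext h (bd c).
Proof.
move=> cone_h; rewrite bd_linext (eq_in_linext cone_h) linext_addl linext_id.
by rewrite [bd c]bd_linextE linext_comp.
Qed.

End Chains.

Section Complex.
Variables (V : finType) (X : {set {set V}}).
Implicit Types (c d : chain V) (s t : {set V}).

Lemma CcD m c d : Cc X m c -> Cc X m d -> Cc X m (c + d).
Proof.
move=> Cc_c Cc_d t; rewrite ffunE; case: (eqVneq (c t) 0) => [->|/Cc_c //].
by rewrite add0r => /Cc_d.
Qed.

Lemma Cc_chain1 s : s \in X -> Cc X #|s| (chain1 s).
Proof. by move=> sX t; rewrite ffunE; case: (eqVneq t s) => [-> | _]; rewrite ?eqxx. Qed.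

Lemma Cc_linext m h c : (forall s, c s != 0 -> Cc X m (h s)) -> Cc X m (linext h c).
Proof. by move=> Cc_h t /linext_support[s /Cc_h Cc_hs /Cc_hs]. Qed.

Lemma Cc_bd m c : simplicial_complex X -> Cc X m.+1 c -> Cc X m (bd c).
Proof.
move=> [_ X_down] Cc_c; rewrite bd_linextE; apply: Cc_linext => s /Cc_c[sX cs] t.
by case/bd_chain1_support=> ts; rewrite cs => -[<-]; split=> //; apply: X_down ts.
Qed.

End Complex.

Section Sufficiency.
Variables (V : finType) (X : {set {set V}}) (v : V).
Hypotheses (HX : simplicial_complex X) (vX : [set v] \in X).
Implicit Types (s t : {set V}) (h : {set V} -> chain V).

Definition partial_cone h m :=
  [/\ h set0 = chain1 [set v],
      forall s, s \in X -> (#|s| <= m)%N -> Cc X #|s|.+1 (h s) &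
      forall s, s \in X -> (#|s| <= m)%N ->
        bd (h s) = chain1 s + linext h (bd (chain1 s))].

Lemma partial_cone_Cc h m j A :
  partial_cone h m -> (j <= m)%N -> Cc X j A -> Cc X j.+1 (linext h A).
Proof.
case=> _ h_Cc _ jm Cc_A; apply: Cc_linext => s /Cc_A[sX cs].
by rewrite -cs; apply: h_Cc; rewrite ?cs.
Qed.

Lemma partial_cone_bd h m j A :
  partial_cone h m -> (j <= m)%N -> Cc X j A -> bd (linext h A) = A + linext h (bd A).
Proof.
case=> _ _ h_bd jm Cc_A; apply: bd_linext_cone => s /Cc_A[sX cs].
by apply: h_bd; rewrite ?cs.
Qed.

Lemma partial_cone0 : partial_cone (fun s => if s == set0 then chain1 [set v] else 0) 0.
Proof.
split=> [|s sX|s sX]; rewrite ?eqxx // leqn0 cards_eq0 => /eqP->; rewrite eqxx.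
  by rewrite cards0 -(cards1 v); apply: Cc_chain1.
have bd_set0 : bd (chain1 (set0 : {set V})) = 0.
  by apply/ffunP=> t; rewrite bd_chain1E cards0 ffunE andbF.
apply/ffunP=> t; rewrite bd_set0 linext0 addr0 bd_chain1E !ffunE.
rewrite cards1 eqSS eq_sym cards_eq0.
by case: eqP => [->|]; rewrite ?sub0set ?andbF.
Qed.

Lemma partial_cone_cycle h m s : partial_cone h m -> s \in X -> #|s| = m.+1 ->
  Cc X m.+1 (chain1 s + linext h (bd (chain1 s))) /\
  bd (chain1 s + linext h (bd (chain1 s))) = 0.
Proof.
move=> h_cone sX cs; have Cc_s : Cc X m.+1 (chain1 s) by rewrite -cs; apply: Cc_chain1.
have Cc_bd_s := Cc_bd HX Cc_s.
split; first by apply: CcD => //; apply: partial_cone_Cc h_cone _ Cc_bd_s.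
by rewrite bdD (partial_cone_bd h_cone _ Cc_bd_s) // bd_bd linext0 addr0 addrr_chain.
Qed.

Lemma partial_coneS h m :
  partial_cone h m -> homology_vanishes X m -> exists h', partial_cone h' m.+1.
Proof.
move=> h_cone hom_m; have [h0 h_Cc h_bd] := h_cone.
have : forall s, exists b, s \in X -> #|s| = m.+1 ->
    Cc X m.+2 b /\ bd b = chain1 s + linext h (bd (chain1 s)).
  move=> s; have [/andP[sX /eqP cs] | not_top] := boolP ((s \in X) && (#|s| == m.+1)).
    have [Cc_z bd_z] := partial_cone_cycle h_cone sX cs.
    by have [b] := hom_m _ Cc_z bd_z; exists b.
  by exists 0 => sX cs; rewrite sX cs eqxx in not_top.
case/functional_choice=> g g_spec; pose h' s := if #|s| == m.+1 then g s else h s.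
have h'_low s : (#|s| <= m.+1)%N ->
    linext h' (bd (chain1 s)) = linext h (bd (chain1 s)).
  move=> sm; apply: eq_in_linext => t /bd_chain1_support[_ cs].
  by rewrite /h' ltn_eqF // -ltnS -cs.
exists h'; split=> [|s sX sm|s sX sm]; rewrite ?h'_low // /h'.
- by rewrite cards0.
- case: eqP => [cs | ncs]; last by apply: h_Cc => //; lia.
  by rewrite cs; case: (g_spec s sX cs).
- case: eqP => [cs | ncs]; last by apply: h_bd => //; lia.
  by case: (g_spec s sX cs).
Qed.

Lemma partial_cone_exists m :
  (forall j, (j < m)%N -> homology_vanishes X j) -> exists h, partial_cone h m.
Proof.
elim: m => [_ | m Ihom_m hom]; first by eexists; apply: partial_cone0.
have [h h_cone] := Ihom_m (fun j jm => hom j (ltnW jm)).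
exact: partial_coneS h_cone (hom m (ltnSn m)).
Qed.

Lemma partial_cone_function h k :
  partial_cone h k.+1 -> cone_function X k v (linext h).
Proof.
move=> h_cone; have [h0 _ _] := h_cone; split.
- exact: linextD.
- by move=> m mk A; apply: partial_cone_Cc h_cone mk.
- by rewrite linext_chain1.
- by move=> j jk A; apply: partial_cone_bd h_cone _; rewrite ltnS.
Qed.

End Sufficiency.

Lemma additive_map0 (A B : zmodType) (f : A -> B) : additive_map f -> f 0 = 0.
Proof. by move=> f_add; apply: (addrI (f 0)); rewrite -f_add !addr0. Qed.

Section Necessity.
Variables (V : finType) (X : {set {set V}}) (k : nat) (v : V) (F : chain V -> chain V).
Hypothesis coneF : cone_function X k v F.

Lemma cone_function_homology j : (j <= k)%N -> homology_vanishes X j.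
Proof.
have [F_add F_Cc _ F_bd] := coneF; move=> jk c Cc_c bd_c.
exists (F c); first by apply: F_Cc; rewrite // ltnS.
by rewrite (F_bd j jk c Cc_c) bd_c additive_map0 // addr0.
Qed.

Lemma cone_function_cohomology j : (j <= k)%N -> cohomology_vanishes X j.
Proof.
have [F_add F_Cc _ F_bd] := coneF; move=> jk phi phi_add phi_cocycle.
exists (fun a => phi (F a)) => [a b | a Cc_a]; first by rewrite F_add phi_add.
have : phi (bd (F a)) = 0 by apply: phi_cocycle; apply: F_Cc; rewrite // ltnW.
by rewrite (F_bd j jk a Cc_a) phi_add => /eqP; rewrite addr_eq0_F2 => /eqP.
Qed.

End Necessity.

Theorem propositionA1 (V : finType) (X : {set {set V}}) (n k : nat) :
  simplicial_complex X -> has_dim X n -> (k <= n.-1)%N -> (0 < n)%N ->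
  (exists (v : V) (F : chain V -> chain V), cone_function X k v F) <->
  (forall j : nat, (j <= k)%N -> homology_vanishes X j /\ cohomology_vanishes X j).
Proof.
move=> HX [[s0 s0X cs0] _] _ _; split.
  move=> [v [F coneF]] j jk.
  split; [exact (cone_function_homology coneF jk) |
          exact (cone_function_cohomology coneF jk)].
move=> vanishing.
have [v vs0] : exists v, v \in s0 by apply/set0Pn; rewrite -card_gt0 cs0.
have vX : [set v] \in X by apply: HX.2 s0X _; rewrite sub1set.
have [h h_cone] :=
  partial_cone_exists HX vX (m := k.+1) (fun j jk => (vanishing j jk).1).
by exists v, (linext h); apply: partial_cone_function.
Qed.
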